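(* Frame equivalence is not compositional in general: there exists a psi-calculus (satisfying all the requisites below) with frames $F,G,H$ such that $F\simeq G$ but not $F\otimes H\simeq G\otimes H$.
   Context: Names: a countably infinite set $\mathcal N$ of atomic names. A nominal set is a set equipped with name swapping operations $(a\;b)\cdot X$; the support $\mathrm n(X)$ is the set of names affected by swappings, assumed finite; $a\#X$ means $a\notin\mathrm n(X)$. Psi-calculus: given by three nominal datatypes $\mathbf T$ (terms), $\mathbf C$ (conditions, $\varphi$), $\mathbf A$ (assertions, $\Psi$), equivariant operators $\leftrightarrow:\mathbf T\times\mathbf T\to\mathbf C$, $\otimes:\mathbf A\times\mathbf A\to\mathbf A$, $\mathbf 1\in\mathbf A$, $\vdash\subseteq\mathbf A\times\mathbf C$, and equivariant substitution functions $X[\tilde a:=\tilde T]$ on $\mathbf T,\mathbf C,\mathbf A$ satisfying: (S1) if $\tilde a\subseteq\mathrm n(X)$ and $b\in\mathrm n(\tilde T)$ then $b\in\mathrm n(X[\tilde a:=\tilde T])$; (S2) if $\tilde b\# X,\tilde a$ then $X[\tilde a:=\tilde T]=((\tilde b\;\tilde a)\cdot X)[\tilde b:=\tilde T]$. $\Psi\simeq\Psi'$ iff for all $\varphi$: $\Psi\vdash\varphi\iff\Psi'\vdash\varphi$. Required: $\Psi\vdash M\leftrightarrow N\Rightarrow\Psi\vdash N\leftrightarrow M$; $\Psi\vdash M\leftrightarrow N\wedge\Psi\vdash N\leftrightarrow L\Rightarrow\Psi\vdash M\leftrightarrow L$; $\Psi\simeq\Psi'\Rightarrow\Psi\otimes\Psi''\simeq\Psi'\otimes\Psi''$;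 $\Psi\otimes\mathbf 1\simeq\Psi$; $(\Psi\otimes\Psi')\otimes\Psi''\simeq\Psi\otimes(\Psi'\otimes\Psi'')$; $\Psi\otimes\Psi'\simeq\Psi'\otimes\Psi$. Frames: $(\nu\tilde b)\Psi$ with the name sequence $\tilde b$ binding into $\Psi$, identified up to alpha-equivalence; $(\nu\tilde b_1)\Psi_1\otimes(\nu\tilde b_2)\Psi_2=(\nu\tilde b_1\tilde b_2)(\Psi_1\otimes\Psi_2)$ where $\tilde b_1\#\tilde b_2,\Psi_2$ and $\tilde b_2\#\tilde b_1,\Psi_1$; $F\vdash\varphi$ iff some alpha-variant $(\nu\tilde b)\Psi$ of $F$ has $\tilde b\#\varphi$ and $\Psi\vdash\varphi$; $F\simeq G$ iff for all $\varphi$, $F\vdash\varphi\iff G\vdash\varphi$; an assertion $\Psi$ is identified with the frame $(\nu\epsilon)\Psi$. *)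

From Stdlib Require Import List Arith Relations.
Import ListNotations.
Set Implicit Arguments.

Definition name := nat.

Definition swap_name (a b c : name) : name :=
  if Nat.eqb c a then b else if Nat.eqb c b then a else c.

(** Nominal sets, presented by swapping (Pitts' axioms) with finite support. *)
Record nominal := Nominal {
  carrier :> Type;
  swap : name -> name -> carrier -> carrier;
  swap_aa : forall a x, swap a a x = x;
  swap_inv : forall a b x, swap a b (swap a b x) = x;
  swap_conj : forall a b c d x,
    swap a b (swap c d x) = swap (swap_name a b c) (swap_name a b d) (swap a b x);
  fin_supp : forall x, exists S : list name,
    forall a b, ~ In a S -> ~ In b S -> swap a b x = x
}.
Arguments swap {n} _ _ _.

Definition supp {X : nominal} (x : X) (a : name) : Prop :=
  forall n, exists b, n <= b /\ swap a b x <> x.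

Definition fresh {X : nominal} (a : name) (x : X) : Prop := ~ supp x a.

Fixpoint swaps {X : nominal} (bs xs : list name) (x : X) : X :=
  match bs, xs with
  | b :: bs', a :: xs' => swap b a (swaps bs' xs' x)
  | _, _ => x
  end.

Definition subst_ok {X Tm : nominal} (sub : X -> list name -> list Tm -> X) : Prop :=
  (forall a b x xs Ts,
     swap a b (sub x xs Ts) = sub (swap a b x) (map (swap_name a b) xs) (map (swap a b) Ts)) /\
  (forall x xs Ts b,
     NoDup xs -> length xs = length Ts ->
     (forall a, In a xs -> supp x a) ->
     (exists M, In M Ts /\ supp M b) ->
     supp (sub x xs Ts) b) /\
  (forall x xs bs Ts,
     NoDup xs -> length xs = length Ts ->
     NoDup bs -> length bs = length xs ->
     (forall b, In b bs -> fresh b x /\ ~ In b xs) ->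
     sub x xs Ts = sub (swaps bs xs x) bs Ts).

Record psi_calculus := PsiCalculus {
  T : nominal;
  C : nominal;
  A : nominal;
  chan_eq : T -> T -> C;
  acomp : A -> A -> A;
  aunit : A;
  ent : A -> C -> Prop;
  substT : T -> list name -> list T -> T;
  substC : C -> list name -> list T -> C;
  substA : A -> list name -> list T -> A;
  chan_eq_eqv : forall a b M N,
    swap a b (chan_eq M N) = chan_eq (swap a b M) (swap a b N);
  acomp_eqv : forall a b P Q,
    swap a b (acomp P Q) = acomp (swap a b P) (swap a b Q);
  aunit_eqv : forall a b, swap a b aunit = aunit;
  ent_eqv : forall a b P phi, ent P phi -> ent (swap a b P) (swap a b phi);
  substT_ok : subst_ok substT;
  substC_ok : subst_ok substC;
  substA_ok : subst_ok substA;
  chan_sym : forall P M N, ent P (chan_eq M N) -> ent P (chan_eq N M);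
  chan_trans : forall P M N L,
    ent P (chan_eq M N) -> ent P (chan_eq N L) -> ent P (chan_eq M L);
  comp_compat : forall P P' P'',
    (forall phi, ent P phi <-> ent P' phi) ->
    (forall phi, ent (acomp P P'') phi <-> ent (acomp P' P'') phi);
  comp_unit : forall P phi, ent (acomp P aunit) phi <-> ent P phi;
  comp_assoc : forall P P' P'' phi,
    ent (acomp (acomp P P') P'') phi <-> ent (acomp P (acomp P' P'')) phi;
  comp_comm : forall P P' phi, ent (acomp P P') phi <-> ent (acomp P' P) phi
}.

Arguments chan_eq {p} _ _.
Arguments acomp {p} _ _.
Arguments aunit {p}.
Arguments ent {p} _ _.

Section Frames.
Variable P : psi_calculus.

Definition frame := (list name * A P)%type.

Definition ffn (F : frame) (a : name) : Prop := supp (snd F) a /\ ~ In a (fst F).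

Definition fswap (a b : name) (F : frame) : frame :=
  (map (swap_name a b) (fst F), swap a b (snd F)).

Definition alpha_step (F G : frame) : Prop :=
  exists b c, ~ ffn F b /\ ~ ffn F c /\ G = fswap b c F.

Definition alpha : frame -> frame -> Prop := clos_refl_sym_trans frame alpha_step.

Definition frame_ent (F : frame) (phi : C P) : Prop :=
  exists bs Psi, alpha F (bs, Psi) /\ (forall b, In b bs -> fresh b phi) /\ ent Psi phi.

Definition frame_equiv (F G : frame) : Prop :=
  forall phi, frame_ent F phi <-> frame_ent G phi.

Definition frame_comp (F G K : frame) : Prop :=
  exists b1 Psi1 b2 Psi2,
    alpha F (b1, Psi1) /\ alpha G (b2, Psi2) /\
    (forall b, In b b1 -> ~ In b b2 /\ fresh b Psi2) /\
    (forall b, In b b2 -> ~ In b b1 /\ fresh b Psi1) /\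
    alpha K (b1 ++ b2, acomp Psi1 Psi2).
End Frames.

From Stdlib Require Import List Arith Relations Lia Classical.
Import ListNotations.

(* Take assertions to be lists of names composed by concatenation, and let a
   condition (l, b) with l nonempty hold in Psi iff every name of l occurs in
   Psi and b records whether Psi contains a name outside l.  Every condition
   mentions a name of Psi, so a frame all of whose assertion names are bound
   entails nothing: (nu 0){0} and (nu){} are equivalent.  Composing with {1}
   gives (nu 0){0,1}, which entails ({1}, true) because of the hidden name 0,
   and {1}, which does not. *)

Ltac swap_name_cases :=
  unfold swap_name;
  repeat match goal with |- context [Nat.eqb ?x ?y] =>
    is_var x; is_var y; destruct (Nat.eqb_spec x y); subst; simpl end;
  try congruence.

Lemma swap_name_aa a c : swap_name a a c = c.
Proof. swap_name_cases. Qed.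

Lemma swap_name_inv a b c : swap_name a b (swap_name a b c) = c.
Proof. swap_name_cases. Qed.

Lemma swap_name_conj a b c d y :
  swap_name a b (swap_name c d y) =
  swap_name (swap_name a b c) (swap_name a b d) (swap_name a b y).
Proof. swap_name_cases. Qed.

Lemma swap_name_l a b : swap_name a b a = b.
Proof. swap_name_cases. Qed.

Lemma swap_name_r a b : swap_name a b b = a.
Proof. swap_name_cases. Qed.

Lemma swap_name_id a b c : c <> a -> c <> b -> swap_name a b c = c.
Proof. swap_name_cases. Qed.

Lemma swap_name_inj a b x y : swap_name a b x = swap_name a b y -> x = y.
Proof. intro E; rewrite <- (swap_name_inv a b x), E; apply swap_name_inv. Qed.

Lemma map_swap_name_inv a b l :
  map (swap_name a b) (map (swap_name a b) l) = l.
Proof.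
  rewrite map_map, <- map_id; apply map_ext; intro; apply swap_name_inv.
Qed.

Lemma map_swap_name_id a b l :
  ~ In a l -> ~ In b l -> map (swap_name a b) l = l.
Proof.
  intros Ha Hb; rewrite <- (map_id l) at 2; apply map_ext_in; intros c Hc.
  apply swap_name_id; intros ->; auto.
Qed.

Lemma in_map_swap_name a b x l :
  In (swap_name a b x) (map (swap_name a b) l) <-> In x l.
Proof.
  split; [|apply in_map].
  intros (z & E & Hz)%in_map_iff; apply swap_name_inj in E; subst; exact Hz.
Qed.

Section NominalSupport.
Context {X : nominal}.

Lemma swap_inj a b (x y : X) : swap a b x = swap a b y -> x = y.
Proof. intro E; rewrite <- (swap_inv _ a b x), E; apply swap_inv. Qed.

Lemma supp_swap_of_supp a b (x : X) d :
  supp x d -> supp (swap a b x) (swap_name a b d).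
Proof.
  intros Hd n; destruct (Hd (n + a + b + 1)) as (e & He & Hne).
  exists e; split; [lia|]; intro E; apply Hne, (swap_inj a b).
  rewrite swap_conj, (swap_name_id a b e) by lia; exact E.
Qed.

Lemma supp_swap a b (x : X) d :
  supp (swap a b x) (swap_name a b d) <-> supp x d.
Proof.
  split; [|apply supp_swap_of_supp].
  intro H; apply (supp_swap_of_supp a b) in H.
  rewrite swap_inv, swap_name_inv in H; exact H.
Qed.

End NominalSupport.

Section Alpha.
Context {P : psi_calculus}.

Lemma fswap_inv b c (F : frame P) : fswap b c (fswap b c F) = F.
Proof.
  destruct F as [bs Psi]; unfold fswap; simpl.
  rewrite map_swap_name_inv, swap_inv; reflexivity.
Qed.

Lemma ffn_fswap b c (F : frame P) d :
  ffn (fswap b c F) (swap_name b c d) <-> ffn F d.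
Proof.
  destruct F as [bs Psi]; unfold ffn, fswap; simpl.
  rewrite supp_swap, in_map_swap_name; tauto.
Qed.

Lemma alpha_step_sym (F G : frame P) : alpha_step F G -> alpha_step G F.
Proof.
  intros (b & c & Hb & Hc & ->); exists b, c.
  rewrite fswap_inv.
  pose proof (ffn_fswap b c F c) as Ec; pose proof (ffn_fswap b c F b) as Eb.
  rewrite swap_name_r in Ec; rewrite swap_name_l in Eb; tauto.
Qed.

Lemma alpha_invariant (Inv : frame P -> Prop) :
  (forall F G, alpha_step F G -> Inv F -> Inv G) ->
  forall F G, alpha F G -> Inv F -> Inv G.
Proof.
  intros Hstep F G H; enough (Inv F <-> Inv G) by tauto.
  induction H as [F G H| | |]; try tauto.
  split; apply Hstep; auto using alpha_step_sym.
Qed.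

Lemma alpha_ffn (F G : frame P) d : alpha F G -> ffn F d -> ffn G d.
Proof.
  apply (alpha_invariant (fun K => ffn K d)); intros K L (b & c & Hb & Hc & ->) Hd.
  assert (db : d <> b) by (intros ->; auto); assert (dc : d <> c) by (intros ->; auto).
  rewrite <- (swap_name_id b c d db dc), ffn_fswap; exact Hd.
Qed.

Lemma frame_ent_alpha (F G : frame P) phi :
  alpha F G -> frame_ent F phi -> frame_ent G phi.
Proof.
  intros H (bs & Psi & Ha & Hfresh & Hent); exists bs, Psi; split; [|auto].
  apply rst_trans with F; [apply rst_sym|]; assumption.
Qed.

Lemma frame_comp_intro (bs1 bs2 : list name) (Psi1 Psi2 : A P) :
  (forall b, In b bs1 -> ~ In b bs2 /\ fresh b Psi2) ->
  (forall b, In b bs2 -> ~ In b bs1 /\ fresh b Psi1) ->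
  frame_comp (bs1, Psi1) (bs2, Psi2) (bs1 ++ bs2, acomp Psi1 Psi2).
Proof.
  intros H1 H2; exists bs1, Psi1, bs2, Psi2.
  split; [apply rst_refl|split; [apply rst_refl|]].
  split; [exact H1|split; [exact H2|apply rst_refl]].
Qed.

End Alpha.

Lemma le_list_max x l : In x l -> x <= list_max l.
Proof. revert x; apply Forall_forall, list_max_le; reflexivity. Qed.

Lemma supp_map_swap_name (l : list name) a :
  (forall n, exists b, n <= b /\ map (swap_name a b) l <> l) <-> In a l.
Proof.
  split.
  - intro H; destruct (in_dec Nat.eq_dec a l) as [|Hna]; [assumption|exfalso].
    destruct (H (S (list_max l))) as (b & Hb & Hne).
    apply Hne, map_swap_name_id; [exact Hna|].
    intros Hbl%le_list_max; lia.
  - intros Ha n; exists (S (n + list_max l)); split; [lia|]; intro E.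
    pose proof (in_map (swap_name a (S (n + list_max l))) l a Ha) as Hb.
    rewrite E, swap_name_l in Hb; apply le_list_max in Hb; lia.
Qed.

Definition name_list_nominal : nominal.
Proof.
  refine (@Nominal (list name) (fun a b l => map (swap_name a b) l) _ _ _ _).
  - intros a l; rewrite <- (map_id l) at 2; apply map_ext, swap_name_aa.
  - apply map_swap_name_inv.
  - intros; rewrite !map_map; apply map_ext; intro; apply swap_name_conj.
  - intro l; exists l; intros; apply map_swap_name_id; assumption.
Defined.

Definition cond_nominal : nominal.
Proof.
  refine (@Nominal (list name * bool)
    (fun a b phi => (map (swap_name a b) (fst phi), snd phi)) _ _ _ _).
  - intros a [l k]; simpl; f_equal; apply (swap_aa name_list_nominal).
  - intros a b [l k]; simpl; f_equal; apply map_swap_name_inv.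
  - intros a b c d [l k]; simpl; f_equal; apply (swap_conj name_list_nominal).
  - intros [l k]; exists l; intros; simpl; f_equal; apply map_swap_name_id; assumption.
Defined.

Definition unit_nominal : nominal.
Proof.
  refine (@Nominal unit (fun _ _ x => x) _ _ _ _); try reflexivity.
  intro; exists []; reflexivity.
Defined.

Lemma supp_name_list (l : name_list_nominal) a : supp l a <-> In a l.
Proof. apply supp_map_swap_name. Qed.

Lemma fresh_name_list (l : name_list_nominal) a : fresh a l <-> ~ In a l.
Proof. unfold fresh; rewrite supp_name_list; reflexivity. Qed.

Lemma supp_cond (phi : cond_nominal) a : supp phi a <-> In a (fst phi).
Proof.
  rewrite <- supp_map_swap_name; destruct phi as [l k]; unfold supp; simpl.
  split; intros H n; destruct (H n) as (b & Hb & Hne); exists b; split; auto;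
    intro E; apply Hne; [rewrite E | injection E]; auto.
Qed.

Lemma not_supp_unit (x : unit_nominal) a : ~ supp x a.
Proof. intro H; destruct (H 0) as (b & _ & Hb); apply Hb; reflexivity. Qed.

Definition names_ent (Psi : list name) (phi : list name * bool) : Prop :=
  fst phi <> [] /\ incl (fst phi) Psi /\
  (snd phi = true <-> exists y, In y Psi /\ ~ In y (fst phi)).

Lemma names_ent_same_names Psi Psi' phi :
  (forall x, In x Psi <-> In x Psi') -> names_ent Psi phi -> names_ent Psi' phi.
Proof.
  intros E (Hne & Hincl & Hflag); split; [exact Hne|split].
  - intros x Hx; apply E, Hincl, Hx.
  - rewrite Hflag; split; intros (y & Hy & Hny); exists y; split; auto; apply E; auto.
Qed.

Lemma names_ent_swap a b Psi phi :
  names_ent Psi phi ->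
  names_ent (map (swap_name a b) Psi) (map (swap_name a b) (fst phi), snd phi).
Proof.
  intros (Hne & Hincl & Hflag); unfold names_ent; simpl; split; [|split].
  - destruct (fst phi); simpl; congruence.
  - intros x (z & <- & Hz)%in_map_iff; apply in_map, Hincl, Hz.
  - rewrite Hflag; split.
    + intros (y & Hy & Hny); exists (swap_name a b y).
      split; [apply in_map, Hy|rewrite in_map_swap_name; exact Hny].
    + intros (y & (z & <- & Hz)%in_map_iff & Hny); exists z.
      rewrite in_map_swap_name in Hny; auto.
Qed.

(* One of the probes ([x], true), ([x], false) holds in Psi, and each forces x into Psi'. *)
Lemma names_ent_incl Psi Psi' :
  (forall phi, names_ent Psi phi -> names_ent Psi' phi) -> incl Psi Psi'.
Proof.
  intros H x Hx.
  assert (Hprobe : names_ent Psi' ([x], true) \/ names_ent Psi' ([x], false)).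
  { destruct (classic (exists y, In y Psi /\ ~ In y [x])) as [Hy | Hny];
      [left | right]; apply H; (split; [discriminate|split]);
      try (intros z [<- | []]; exact Hx); simpl; split; tauto || discriminate. }
  destruct Hprobe as [(_ & Hincl & _) | (_ & Hincl & _)]; apply Hincl; left; reflexivity.
Qed.

Definition hidden_names_calculus : psi_calculus.
Proof.
  refine (@PsiCalculus unit_nominal cond_nominal name_list_nominal
    (fun _ _ => ([], false)) (@app name) [] names_ent
    (fun _ _ _ => tt) (fun _ _ _ => ([], false)) (fun _ _ _ => [])
    _ _ _ _ _ _ _ _ _ _ _ _ _).
  - reflexivity.
  - intros; apply map_app.
  - reflexivity.
  - intros; apply names_ent_swap; assumption.
  - split; [reflexivity|split; [|reflexivity]].
    intros x xs Ts b _ _ _ (M & _ & HM); destruct (not_supp_unit _ _ HM).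
  - split; [reflexivity|split; [|reflexivity]].
    intros x xs Ts b _ _ _ (M & _ & HM); destruct (not_supp_unit _ _ HM).
  - split; [reflexivity|split; [|reflexivity]].
    intros x xs Ts b _ _ _ (M & _ & HM); destruct (not_supp_unit _ _ HM).
  - intros; assumption.
  - intros; assumption.
  - intros Psi Psi' Psi'' E.
    assert (Hsame : forall x, In x Psi <-> In x Psi').
    { intro x; split; apply names_ent_incl; intro phi; apply E. }
    split; apply names_ent_same_names; intro x; rewrite !in_app_iff, Hsame; tauto.
  - intros Psi phi; simpl; rewrite app_nil_r; reflexivity.
  - intros; simpl; rewrite app_assoc; reflexivity.
  - split; apply names_ent_same_names; intro x; rewrite !in_app_iff; tauto.
Defined.

Notation frameH := (frame hidden_names_calculus).

Lemma ffn_frameH (F : frameH) d :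
  ffn F d <-> In d (snd F : list name) /\ ~ In d (fst F).
Proof. unfold ffn; rewrite (supp_name_list (snd F) d); reflexivity. Qed.

Lemma alpha_assertion_length (F G : frameH) :
  alpha F G -> length (snd F : list name) = length (snd G : list name).
Proof.
  intro H; apply (alpha_invariant
    (fun K : frameH => length (snd F : list name) = length (snd K : list name))) with F;
    [|exact H|reflexivity].
  intros K L (b & c & _ & _ & ->) HK; simpl; rewrite length_map; exact HK.
Qed.

Definition assertion_bound (F : frameH) : Prop :=
  forall y, In y (snd F : list name) -> In y (fst F).

Definition assertion_free (F : frameH) : Prop :=
  forall y, In y (snd F : list name) -> ~ In y (fst F).

Lemma alpha_assertion_bound (F G : frameH) :
  alpha F G -> assertion_bound F -> assertion_bound G.
Proof.
  apply alpha_invariant.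
  intros [bs Psi] L (b & c & _ & _ & ->) HK y (z & <- & Hz)%in_map_iff.
  apply in_map, HK, Hz.
Qed.

Lemma alpha_assertion_free (F G : frameH) :
  alpha F G -> assertion_free F -> assertion_free G.
Proof.
  apply alpha_invariant.
  intros [bs Psi] L (b & c & _ & _ & ->) HK y (z & <- & Hz)%in_map_iff.
  simpl; rewrite in_map_swap_name; apply HK, Hz.
Qed.

Lemma not_frame_ent_bound (F : frameH) phi :
  assertion_bound F -> ~ frame_ent F phi.
Proof.
  intros HF (bs & Psi & Ha & Hfresh & Hne & Hincl & _).
  apply (alpha_assertion_bound _ _ Ha) in HF.
  destruct (fst phi) as [|x l] eqn:E; [contradiction|].
  apply (Hfresh x), supp_cond; [apply HF, Hincl; left; reflexivity|].
  rewrite E; left; reflexivity.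
Qed.

Lemma not_frame_ent_free (F : frameH) l :
  assertion_free F -> (forall d, ffn F d -> In d l) -> ~ frame_ent F (l, true).
Proof.
  intros HF Hl (bs & Psi & Ha & _ & _ & _ & Hflag).
  destruct (proj1 Hflag eq_refl) as (y & Hy & Hny); apply Hny, Hl.
  apply (alpha_ffn (bs, Psi) F y (rst_sym _ _ _ _ Ha)), ffn_frameH; split; [exact Hy|].
  apply (alpha_assertion_free _ _ Ha HF), Hy.
Qed.

Definition free_name_frame (a : name) : frameH := ([], [a]).

Lemma alpha_free_name_frame (a : name) (K : frameH) :
  alpha (free_name_frame a) K ->
  In a (snd K : list name) /\ ~ In a (fst K) /\ forall y, In y (snd K : list name) -> y = a.
Proof.
  intro H.
  assert (Ha : ffn K a) by (apply (alpha_ffn _ _ a H), ffn_frameH; simpl; tauto).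
  apply ffn_frameH in Ha as [Ha Hna]; repeat split; [exact Ha|exact Hna|].
  intros y Hy.
  assert (Hy' : ffn (free_name_frame a) y).
  { apply (alpha_ffn K _ y (rst_sym _ _ _ _ H)), ffn_frameH; split; [exact Hy|].
    apply (alpha_assertion_free _ _ H); [intros z _ []|exact Hy]. }
  apply ffn_frameH in Hy' as [[-> | []] _]; reflexivity.
Qed.

(* The hidden name witnessing the flag is a binder of F, hence distinct from the free name a. *)
Lemma frame_ent_comp_hidden (F K : frameH) (a : name) :
  assertion_bound F -> (snd F : list name) <> [] ->
  frame_comp F (free_name_frame a) K -> frame_ent K ([a], true).
Proof.
  intros HF Hne (bs1 & Psi1 & bs2 & Psi2 & A1 & A2 & D1 & D2 & A3).
  destruct (alpha_free_name_frame _ _ A2) as (Ha & Hna & _).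
  assert (Hbs1 : forall b, In b bs1 -> b <> a).
  { intros b Hb ->; apply (proj2 (D1 a Hb)), supp_name_list, Ha. }
  destruct Psi1 as [|y Psi1].
  { exfalso; apply Hne, length_zero_iff_nil; rewrite (alpha_assertion_length _ _ A1); reflexivity. }
  assert (Hy : In y bs1) by (apply (alpha_assertion_bound _ _ A1 HF); left; reflexivity).
  exists (bs1 ++ bs2), ((y :: Psi1) ++ Psi2 : list name); split; [exact A3|split].
  - intros b Hb; unfold fresh; rewrite supp_cond; simpl.
    intros [<- | []]; apply in_app_iff in Hb as [Hb | Hb];
      [exact (Hbs1 _ Hb eq_refl) | exact (Hna Hb)].
  - split; [discriminate|split].
    + intros z [<- | []]; apply in_app_iff; right; exact Ha.
    + split; [intros _|reflexivity].
      exists y; split; [left; reflexivity|]; intros [E | []]; exact (Hbs1 _ Hy (eq_sym E)).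
Qed.

Lemma not_frame_ent_comp_empty (G K : frameH) (a : name) :
  (snd G : list name) = [] -> frame_comp G (free_name_frame a) K -> ~ frame_ent K ([a], true).
Proof.
  intros HG (bs1 & Psi1 & bs2 & Psi2 & A1 & A2 & D1 & D2 & A3) Hent.
  destruct (alpha_free_name_frame _ _ A2) as (Ha & Hna & Hall).
  assert (Hnil : Psi1 = [] :> list name).
  { apply length_zero_iff_nil; change (length (snd (bs1, Psi1) : list name) = 0).
    rewrite <- (alpha_assertion_length _ _ A1), HG; reflexivity. }
  assert (Hna1 : ~ In a bs1) by (intro Hb; apply (proj2 (D1 a Hb)), supp_name_list, Ha).
  apply (frame_ent_alpha _ _ _ A3) in Hent; revert Hent.
  apply not_frame_ent_free; simpl; rewrite Hnil; simpl.
  - intros y Hy; simpl in *; rewrite (Hall y Hy), in_app_iff; tauto.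
  - intros d (Hd & _)%ffn_frameH; left; symmetry; apply Hall, Hd.
Qed.

Theorem mainTheorem10 :
  exists (P : psi_calculus) (F G H : frame P),
    frame_equiv F G /\
    (exists K1, frame_comp F H K1) /\ (exists K2, frame_comp G H K2) /\
    (forall K1 K2, frame_comp F H K1 -> frame_comp G H K2 -> ~ frame_equiv K1 K2).
Proof.
  exists hidden_names_calculus, ([0], [0] : list name), ([], [] : list name), (free_name_frame 1).
  assert (Hbound : assertion_bound ([0], [0] : list name))
    by (intros y [<- | []]; left; reflexivity).
  split; [|split; [|split]].
  - intro phi; split; intro Hent; exfalso; revert Hent; apply not_frame_ent_bound;
      [exact Hbound | intros y []].
  - eexists; apply (@frame_comp_intro hidden_names_calculus); [|intros b []].
    intros b [<- | []]; split; [intros []|apply fresh_name_list; intros [E | []]; discriminate].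
  - eexists; apply (@frame_comp_intro hidden_names_calculus); intros b [].
  - intros K1 K2 H1 H2 E.
    apply (not_frame_ent_comp_empty ([], [] : list name) K2 1 eq_refl H2), E.
    apply (frame_ent_comp_hidden _ _ 1 Hbound); [discriminate|exact H1].
Qed.
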